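(* For all integers $v\ge 2$ and $t\ge 2$, $I_t(2,v)=v-1$.
   Context: A $(w,v)$ set system is a pair $(\mathcal{X},\mathcal{B})$ with $|\mathcal{X}|=v$ and $\mathcal{B}\subseteq\binom{\mathcal{X}}{w}$ (the family of all $w$-element subsets of $\mathcal{X}$); elements of $\mathcal{B}$ are blocks. For a $w$-subset $T\subseteq\mathcal{X}$ let $P_t(T)=\{\mathcal{P}\subseteq\mathcal{B}: |\mathcal{P}|\le t,\ T\subseteq\bigcup_{B\in\mathcal{P}}B\}$. The set system is a $t$-IPPS$(w,v)$ if for every $w$-subset $T\subseteq\mathcal{X}$, either $P_t(T)=\emptyset$ or $\bigcap_{\mathcal{P}\in P_t(T)}\mathcal{P}\neq\emptyset$. $I_t(w,v)$ denotes the maximum of $|\mathcal{B}|$ over all $t$-IPPS$(w,v)$. *)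

From mathcomp Require Import all_boot.
Set Implicit Arguments. Unset Strict Implicit. Unset Printing Implicit Defensive.

Definition set_system (v w : nat) (Bs : {set {set 'I_v}}) : bool :=
  [forall B in Bs, #|B| == w].

Definition Pt (v t : nat) (Bs : {set {set 'I_v}}) (T : {set 'I_v})
  : {set {set {set 'I_v}}} :=
  [set P in powerset Bs | (#|P| <= t) && (T \subset \bigcup_(B in P) B)].

Definition is_IPPS (v t w : nat) (Bs : {set {set 'I_v}}) : bool :=
  set_system w Bs &&
  [forall T : {set 'I_v}, (#|T| == w) ==>
     ((Pt t Bs T == set0) ||
      [exists B : {set 'I_v}, [forall P in Pt t Bs T, B \in P]])].

Definition I_t (t w v : nat) : nat :=
  \max_(Bs : {set {set 'I_v}} | is_IPPS t w Bs) #|Bs|.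

From mathcomp Require Import all_boot.
Set Implicit Arguments. Unset Strict Implicit.

(* Blocks of size 2 are edges of a graph on 'I_v.  If x != y and e, f are edges
   through x and y, then {e, f} covers {x, y}; so if x and y both had two edges
   e1, e2 and f1, f2, the four covers {ei, fj} would need a common edge, which
   forces e1 = e2 or f1 = f2.  Hence at most one vertex c has degree >= 2, and
   mapping every edge to its endpoint other than c is injective into the v - 1
   vertices other than c.  The star of all edges through c attains the bound. *)

Lemma crossed_pairs_common (T : finType) (b e1 e2 f1 f2 : T) :
  b \in [set e1; f1] -> b \in [set e2; f2] ->
  b \in [set e1; f2] -> b \in [set e2; f1] -> (e1 == e2) || (f1 == f2).
Proof.
rewrite !inE => /orP[]/eqP-> /orP[]/eqP E2 /orP[]/eqP E3 /orP[]/eqP E4;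
  by subst; rewrite eqxx ?orbT.
Qed.

Lemma card2_exists_other (T : finType) (A : {set T}) (c : T) :
  #|A| == 2 -> exists2 u, u \in A & u != c.
Proof.
move=> /cards2P[a [b [ab ->]]].
case: (eqVneq a c) ab => [-> cb | ac _]; last by exists a; rewrite ?inE ?eqxx.
by exists b; rewrite 1?eq_sym // !inE eqxx orbT.
Qed.

Section TwoUniform.

Variables (v : nat) (Bs : {set {set 'I_v}}).

Definition degree (u : 'I_v) : nat := #|[set B in Bs | u \in B]|.

Lemma pair_cover_in_Pt t (x y : 'I_v) e f :
  2 <= t -> e \in Bs -> f \in Bs -> x \in e -> y \in f ->
  [set e; f] \in Pt t Bs [set x; y].
Proof.
move=> le2t eB fB xe yf; rewrite inE powersetE.
apply/and3P; split.
- by apply/subsetP => B; rewrite !inE => /orP[]/eqP->.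
- by rewrite cards2; apply: leq_trans le2t; case: (e != f).
- apply/subsetP => z; rewrite !inE => /orP[]/eqP->.
  + by apply: (subsetP (bigcup_sup e _)); rewrite ?inE ?eqxx.
  + by apply: (subsetP (bigcup_sup f _)); rewrite ?inE ?eqxx ?orbT.
Qed.

Lemma IPPS2_branch_point_uniq t (x y : 'I_v) :
  2 <= t -> is_IPPS t 2 Bs -> 1 < degree x -> 1 < degree y -> x = y.
Proof.
move=> le2t /andP[_ /forallP /(_ [set x; y])] IPPSxy.
move=> /card_gt1P[e1 [e2 [+ + ne]]] /card_gt1P[f1 [f2 [+ + nf]]].
rewrite !inE => /andP[e1B xe1] /andP[e2B xe2] /andP[f1B yf1] /andP[f2B yf2].
have cover e f := @pair_cover_in_Pt t x y e f le2t.
case: (eqVneq x y) IPPSxy => // xy; rewrite cards2 xy /= => /orP[/eqP Pt0 | ].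
  by have := cover _ _ e1B f1B xe1 yf1; rewrite Pt0 inE.
case/existsP => b /forall_inP common.
have := crossed_pairs_common (common _ (cover _ _ e1B f1B xe1 yf1))
  (common _ (cover _ _ e2B f2B xe2 yf2)) (common _ (cover _ _ e1B f2B xe1 yf2))
  (common _ (cover _ _ e2B f1B xe2 yf1)).
by rewrite (negbTE ne) (negbTE nf).
Qed.

Lemma degree_le1_block_uniq (u : 'I_v) :
  degree u <= 1 ->
  {in Bs &, forall B1 B2 : {set 'I_v}, u \in B1 -> u \in B2 -> B1 = B2}.
Proof.
move=> /card_le1_eqP uniq_u B1 B2 B1s B2s uB1 uB2.
by apply: uniq_u; rewrite inE ?B1s ?B2s.
Qed.

Lemma card_le_of_degree_le1 (c : 'I_v) :
  set_system 2 Bs -> (forall u, u != c -> degree u <= 1) -> #|Bs| <= v - 1.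
Proof.
move=> /forall_inP card2 low.
pose g (B : {set 'I_v}) := odflt c [pick u in B | u != c].
have gP B : B \in Bs -> g B \in B /\ g B != c.
  move=> /card2 /(card2_exists_other c)[u uB uc]; rewrite /g.
  by case: pickP => [w /andP[] // | /(_ u)]; rewrite uB uc.
have g_inj : {in Bs &, injective g}.
  move=> B1 B2 B1s B2s gE; have [gB1 gc] := gP _ B1s; have [gB2 _] := gP _ B2s.
  by apply: (degree_le1_block_uniq (low _ gc)); rewrite // gE.
rewrite -(card_in_imset g_inj) subn1 -[v in v.-1]card_ord -(cardsC1 c).
apply: subset_leq_card.
by apply/subsetP => _ /imsetP[B Bs_B ->]; rewrite !inE (gP _ Bs_B).2.
Qed.

Lemma IPPS2_card_le t : 0 < v -> 2 <= t -> is_IPPS t 2 Bs -> #|Bs| <= v - 1.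
Proof.
move=> v_gt0 le2t IPPS; have [sys _] := andP IPPS.
case: (pickP (fun u => 1 < degree u)) => [c deg_c | low].
  apply: (card_le_of_degree_le1 sys (c := c)) => u; rewrite leqNgt.
  apply: contra => deg_u.
  by rewrite (IPPS2_branch_point_uniq le2t IPPS deg_u deg_c).
apply: (card_le_of_degree_le1 sys (c := Ordinal v_gt0)) => u _.
by rewrite leqNgt low.
Qed.

End TwoUniform.

Definition star (v : nat) (c : 'I_v) : {set {set 'I_v}} :=
  [set [set c; x] | x in [set~ c]].

Lemma card_star v (c : 'I_v) : #|star c| = v - 1.
Proof.
rewrite card_in_imset ?cardsC1 ?card_ord ?subn1 // => x y.
rewrite !inE => xc _ Exy.
have : x \in [set c; y] by rewrite -Exy !inE eqxx orbT.
by rewrite !inE (negbTE xc) => /eqP.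
Qed.

Lemma star_IPPS v t (c : 'I_v) : is_IPPS t 2 (star c).
Proof.
apply/andP; split.
  apply/forall_inP => _ /imsetP[x xc ->].
  by move: xc; rewrite cards2 !inE eq_sym => ->.
apply/forall_inP => T /(card2_exists_other c)[u uT uc]; apply/orP; right.
apply/existsP; exists [set c; u]; apply/forall_inP => P.
rewrite inE powersetE => /and3P[PB _ /subsetP cover].
have /bigcupP[B BP uB] := cover u uT.
have /imsetP[x _ EB] := subsetP PB B BP.
by move: uB; rewrite EB !inE (negbTE uc) /= => /eqP Eu; rewrite Eu -EB.
Qed.

Theorem theorem3 (v t : nat) : 2 <= v -> 2 <= t -> I_t t 2 v = v - 1.
Proof.
move=> le2v le2t; have v_gt0 : 0 < v by apply: leq_trans le2v.
apply/anti_leq/andP; split.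
  by apply/bigmax_leqP => Bs; apply: IPPS2_card_le.
by rewrite -(card_star (Ordinal v_gt0)); apply: bigmax_sup (star_IPPS _ _) _.
Qed.
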